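(* Let $T$ be a $3$-CET with exactly one flip, with domain $S^1\setminus\{a_0,a_1,a_2\}$ where $0=a_0<a_1<a_2<a_3=1$ and $I_i=(a_{i-1},a_i)$, $i=1,2,3$, such that $I_1$ is the flip of $T$ and $T(I_1)<T(I_3)<T(I_2)$ in the cyclic order. Assume that $T$ has no periodic points. Then there exists $N\ge 2$ such that $T^n(I_1)\cap I_1=\emptyset$ for all $1\le n\le N-1$ and $T^N(I_1)\cap I_1\neq\emptyset$. Furthermore, the sets $T^n(I_1)$, $0\le n\le N-1$, are pairwise disjoint.
   Context: $S^1=[0,1]/(0\sim1)$ with orientation induced by $[0,1]$ and points written as points of $[0,1]$. A $3$-CET is an injective map $T:I_1\cup I_2\cup I_3\to S^1$, where $I_1,I_2,I_3$ are pairwise disjoint open subintervals whose closures cover $S^1$, which is an isometry on each $I_i$ and cannot be continuously extended to a larger open set. A flip is an $I_i$ on which $T$ reverses orientation. For a set $J$, $T^n(J)=\{T^n(x): x\in J\cap \mathrm{Dom}(T^n)\}$. For subintervals $J_1,J_2,J_3$ of $S^1$, $J_1<J_2<J_3$ means every triple $(x_1,x_2,x_3)\in J_1\times J_2\times J_3$ is cyclically ordered. A periodic point is $p$ with $T^m(p)=p$ for some $m\ge1$. *)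

(* concrete reals R.  S^1 = [0,1)/(0~1); points are reals in [0,1). *)
From Stdlib Require Import Reals.
Open Scope R_scope.

Definition md1 (x : R) : R := frac_part x.

Definition cdist (x y : R) : R := Rmin (md1 (x - y)) (1 - md1 (x - y)).

Definition cyc (x y z : R) : Prop :=
  (x < y < z) \/ (y < z < x) \/ (z < x < y).

Definition I1 (a1 a2 : R) (x : R) : Prop := 0 < x < a1.
Definition I2 (a1 a2 : R) (x : R) : Prop := a1 < x < a2.
Definition I3 (a1 a2 : R) (x : R) : Prop := a2 < x < 1.

Definition Dom (a1 a2 : R) (x : R) : Prop := I1 a1 a2 x \/ I2 a1 a2 x \/ I3 a1 a2 x.

(* T restricted to J is the isometry x |-> s*x + c (mod 1); s = 1 orientation
   preserving (rotation), s = -1 orientation reversing (reflection). *)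
Definition piece_iso (T : R -> R) (J : R -> Prop) (s : R) : Prop :=
  exists c : R, forall x, J x -> T x = md1 (s * x + c).

Definition isometry_on (T : R -> R) (J : R -> Prop) : Prop :=
  piece_iso T J 1 \/ piece_iso T J (-1).

Definition is_flip (T : R -> R) (J : R -> Prop) : Prop := piece_iso T J (-1).

Definition extends_cont_at (T : R -> R) (D : R -> Prop) (p : R) : Prop :=
  exists v, 0 <= v < 1 /\
    forall eps, 0 < eps -> exists delta, 0 < delta /\
      forall x, D x -> cdist x p < delta -> cdist (T x) v < eps.

Definition CET3 (T : R -> R) (a1 a2 : R) : Prop :=
  0 < a1 < a2 /\ a2 < 1 /\
  (forall x y, Dom a1 a2 x -> Dom a1 a2 y -> T x = T y -> x = y) /\
  isometry_on T (I1 a1 a2) /\ isometry_on T (I2 a1 a2) /\ isometry_on T (I3 a1 a2) /\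
  (* cannot be continuously extended to a larger open set *)
  ~ extends_cont_at T (Dom a1 a2) 0 /\
  ~ extends_cont_at T (Dom a1 a2) a1 /\
  ~ extends_cont_at T (Dom a1 a2) a2.

Definition inDomIter (T : R -> R) (a1 a2 : R) (n : nat) (x : R) : Prop :=
  forall k, (k < n)%nat -> Dom a1 a2 (Nat.iter k T x).

Definition imgIter (T : R -> R) (a1 a2 : R) (n : nat) (J : R -> Prop) (y : R) : Prop :=
  exists x, J x /\ inDomIter T a1 a2 n x /\ y = Nat.iter n T x.

Definition periodic_point (T : R -> R) (a1 a2 : R) (p : R) : Prop :=
  exists m, (1 <= m)%nat /\ inDomIter T a1 a2 m p /\ Nat.iter m T p = p.

Definition cyc_sets (J1 J2 J3 : R -> Prop) : Prop :=
  forall x1 x2 x3, J1 x1 -> J2 x2 -> J3 x3 -> cyc x1 x2 x3.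

Definition disjoint (A B : R -> Prop) : Prop := forall x, A x -> B x -> False.

From Stdlib Require Import Reals Lra Lia List Classical.
Open Scope R_scope.

(* Since [I1] is a flip, [T x = c - x (mod 1)] there, so if [T x] were again in [I1] the
   midpoint of [x] and [T x] would be a fixed point; hence the first return time [N] of [I1]
   is at least 2.  A return happens at all by Poincare recurrence: [T] is an injective
   piecewise isometry, so [T^n(I1)] contains finitely many pairwise disjoint open intervals
   of total length [a1], and if no [T^n(I1)] met [I1], the sets [T^n(I1)] would be pairwise
   disjoint and more than [1/a1] of them could not fit into the circle.  Finally, by
   injectivity, a common point of [T^m(I1)] and [T^n(I1)], [m < n], pulls back to a point
   of [T^(n-m)(I1) ∩ I1]. *)

Lemma md1_bounds x : 0 <= md1 x < 1.
Proof. unfold md1. destruct (base_fp x). lra. Qed.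

Lemma md1_IZR_add k y : 0 <= y < 1 -> md1 (IZR k + y) = y.
Proof.
  intros Hy. unfold md1, frac_part, Int_part.
  rewrite <- (tech_up (IZR k + y) (k + 1)); rewrite ?plus_IZR; simpl; try lra.
  replace (k + 1 - 1)%Z with k by ring. lra.
Qed.

Lemma md1_shift z t y : 0 <= y < 1 ->
  md1 z + t = y \/ md1 z + t = y + 1 -> md1 (z + t) = y.
Proof.
  intros Hy E. assert (Hz : md1 z = z - IZR (Int_part z)) by reflexivity.
  rewrite Hz in E. destruct E as [E | E].
  - replace (z + t) with (IZR (Int_part z) + y) by lra. now apply md1_IZR_add.
  - replace (z + t) with (IZR (Int_part z + 1) + y) by (rewrite plus_IZR; simpl; lra).
    now apply md1_IZR_add.
Qed.

(** * Disjoint intervals in the unit interval *)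

Definition itv : Type := (R * R)%type.
Definition in_itv (J : itv) (y : R) : Prop := fst J < y < snd J.
Definition itv_len (J : itv) : R := Rmax 0 (snd J - fst J).
Definition itv_in_unit (J : itv) : Prop := 0 <= fst J /\ snd J <= 1.
Definition itv_disjoint (J K : itv) : Prop := forall y, in_itv J y -> in_itv K y -> False.
Definition itv_pairwise_disjoint : list itv -> Prop := ForallOrdPairs itv_disjoint.
Definition total_len (L : list itv) : R := fold_right (fun J s => itv_len J + s) 0 L.
Definition clip (J P : itv) : itv := (Rmax (fst J) (fst P), Rmin (snd J) (snd P)).

Lemma itv_len_cases J :
  (snd J <= fst J /\ itv_len J = 0) \/ (fst J < snd J /\ itv_len J = snd J - fst J).
Proof.
  unfold itv_len, Rmax.
  destruct (Rle_dec (snd J) (fst J)); [left | right]; destruct Rle_dec; lra.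
Qed.

Lemma in_clip J P y : in_itv (clip J P) y <-> in_itv J y /\ in_itv P y.
Proof.
  unfold in_itv, clip, Rmax, Rmin; simpl.
  split; [intros H | intros [H1 H2]]; repeat destruct Rle_dec; lra.
Qed.

Lemma clip_in_unit J P : itv_in_unit P -> itv_in_unit (clip J P).
Proof.
  unfold itv_in_unit, clip; simpl. intros HP.
  pose proof (Rmax_r (fst J) (fst P)). pose proof (Rmin_r (snd J) (snd P)). lra.
Qed.

Lemma itv_disjoint_order J K : fst J < snd J -> fst K < snd K -> itv_disjoint J K ->
  snd K <= fst J \/ snd J <= fst K.
Proof.
  intros HJ HK Hd.
  destruct (Rle_dec (snd K) (fst J)) as [|HKJ]; [now left|].
  destruct (Rle_dec (snd J) (fst K)) as [|HJK]; [now right|].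
  exfalso. apply (Hd ((Rmax (fst J) (fst K) + Rmin (snd J) (snd K)) / 2));
    unfold in_itv, Rmax, Rmin; repeat destruct Rle_dec; lra.
Qed.

Lemma total_len_app L L' : total_len (L ++ L') = total_len L + total_len L'.
Proof. induction L; simpl; lra. Qed.

Lemma total_len_flat_map {A} (g : A -> list itv) (f : A -> R) l :
  (forall a, In a l -> total_len (g a) = f a) ->
  total_len (flat_map g l) = fold_right (fun a s => f a + s) 0 l.
Proof.
  induction l as [|a l IH]; simpl; intros H; [reflexivity|].
  rewrite total_len_app, H, IH; auto.
Qed.

Lemma total_len_filter (f : itv -> bool) L :
  total_len L = total_len (filter f L) + total_len (filter (fun J => negb (f J)) L).
Proof. induction L as [|J L IH]; simpl; [lra|]. destruct (f J); simpl; lra. Qed.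

Lemma fold_right_add_const {X} (r : R) (l : list X) :
  fold_right (fun _ s => r + s) 0 l = INR (length l) * r.
Proof. induction l as [|x l IH]; simpl length; rewrite ?S_INR; simpl; lra. Qed.

Lemma pairwise_disjoint_app L L' :
  itv_pairwise_disjoint L -> itv_pairwise_disjoint L' ->
  (forall J K, In J L -> In K L' -> itv_disjoint J K) ->
  itv_pairwise_disjoint (L ++ L').
Proof.
  induction 1 as [|J L HJ HL IH]; simpl; intros HL' Hx; auto.
  constructor.
  - apply Forall_app. split; [exact HJ|].
    apply Forall_forall. intros K HK. exact (Hx J K (or_introl eq_refl) HK).
  - apply IH; [exact HL'|]. intros J' K HJ' HK. exact (Hx J' K (or_intror HJ') HK).
Qed.

Lemma pairwise_disjoint_flat_map {A} (Rel : A -> A -> Prop) (g : A -> list itv) l :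
  ForallOrdPairs Rel l ->
  (forall a, In a l -> itv_pairwise_disjoint (g a)) ->
  (forall a b, In a l -> In b l -> Rel a b ->
     forall J K, In J (g a) -> In K (g b) -> itv_disjoint J K) ->
  itv_pairwise_disjoint (flat_map g l).
Proof.
  induction 1 as [|a l Ha Hl IH]; simpl; intros Hg Hrel; [constructor|].
  apply pairwise_disjoint_app; auto.
  - apply IH; auto. intros b b' Hb Hb'. apply Hrel; auto.
  - intros J K HJ HK. apply in_flat_map in HK as [b [Hb HK]].
    rewrite Forall_forall in Ha. eauto.
Qed.

Lemma pairwise_disjoint_filter f L :
  itv_pairwise_disjoint L -> itv_pairwise_disjoint (filter f L).
Proof.
  induction 1 as [|J L HJ HL IH]; simpl; [constructor|].
  destruct (f J); auto. constructor; auto.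
  rewrite Forall_forall in *. intros K HK. apply filter_In in HK. apply HJ, HK.
Qed.

Definition itv_within (A B : R) (J : itv) : Prop :=
  itv_len J = 0 \/ (A <= fst J /\ snd J <= B).

Definition left_of (J K : itv) : bool := if Rle_dec (snd K) (fst J) then true else false.

Lemma Forall_filter {X} (Q : X -> Prop) (f : X -> bool) l :
  (forall x, In x l -> f x = true -> Q x) -> Forall Q (filter f l).
Proof. intros HQ. apply Forall_forall. intros x Hx. apply filter_In in Hx. apply HQ; tauto. Qed.

Lemma total_len_le_span L : forall A B, A <= B ->
  Forall (itv_within A B) L -> itv_pairwise_disjoint L -> total_len L <= B - A.
Proof.
  induction L as [L IH] using (well_founded_ind (Wf_nat.well_founded_ltof _ (@length itv))).
  intros A B HAB Hin Hpd. destruct L as [|J L]; simpl; [lra|].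
  inversion Hin as [|? ? HJ HL]; inversion Hpd as [|? ? HdJ HpdL]; subst.
  rewrite Forall_forall in HL, HdJ.
  assert (IHL : forall L', (length L' <= length L)%nat -> forall A' B', A' <= B' ->
    Forall (itv_within A' B') L' -> itv_pairwise_disjoint L' -> total_len L' <= B' - A').
  { intros L' HL'. apply IH. unfold Wf_nat.ltof; simpl; lia. }
  destruct (itv_len_cases J) as [[_ HJ0] | [HJpos HJlen]].
  { rewrite HJ0. specialize (IHL L (le_n _) A B HAB (proj2 (Forall_forall _ _) HL) HpdL).
    lra. }
  destruct HJ as [|[HAJ HJB]]; [lra|].
  rewrite (total_len_filter (left_of J) L), HJlen.
  assert (Hleft : total_len (filter (left_of J) L) <= fst J - A).
  { apply IHL; [apply filter_length_le | lra | | now apply pairwise_disjoint_filter].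
    apply Forall_filter. intros K HK Hf. destruct (HL K HK) as [|[HK1 _]]; [now left|right].
    unfold left_of in Hf. destruct Rle_dec; [lra | discriminate]. }
  assert (Hright : total_len (filter (fun K => negb (left_of J K)) L) <= B - snd J).
  { apply IHL; [apply filter_length_le | lra | | now apply pairwise_disjoint_filter].
    apply Forall_filter. intros K HK Hf. destruct (HL K HK) as [|[_ HK2]]; [now left|].
    destruct (itv_len_cases K) as [[_ ?] | [HKpos _]]; [now left|right].
    unfold left_of in Hf. destruct Rle_dec; [discriminate|].
    destruct (itv_disjoint_order J K HJpos HKpos (HdJ K HK)); lra. }
  lra.
Qed.

Lemma total_len_le_1 L :
  Forall itv_in_unit L -> itv_pairwise_disjoint L -> total_len L <= 1.
Proof.
  intros Hin Hpd. replace 1 with (1 - 0) by lra.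
  apply total_len_le_span; [lra | | exact Hpd].
  apply Forall_forall. intros J HJ. right. now apply (proj1 (Forall_forall _ _) Hin).
Qed.

(** * Images of intervals under isometries of the circle *)

Lemma itv_len_bounds P : itv_in_unit P -> 0 <= itv_len P <= 1.
Proof. unfold itv_in_unit, itv_len, Rmax. destruct Rle_dec; lra. Qed.

(* The arc of length [l] starting at [p] on the circle, cut at [0]. *)
Definition arc (p l : R) : list itv := (p, Rmin 1 (p + l)) :: (0, p + l - 1) :: nil.

Lemma total_len_arc p l : 0 <= p < 1 -> 0 <= l -> total_len (arc p l) = l.
Proof.
  intros Hp Hl. unfold total_len, arc, itv_len, Rmax, Rmin; simpl.
  repeat destruct Rle_dec; lra.
Qed.

Lemma arc_in_unit p l : 0 <= p < 1 -> l <= 1 -> Forall itv_in_unit (arc p l).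
Proof.
  intros Hp Hl. apply Forall_forall. intros J HJ. simpl in HJ.
  destruct HJ as [<- | [<- | []]]; unfold itv_in_unit, Rmin; simpl; repeat destruct Rle_dec; lra.
Qed.

Lemma arc_pairwise_disjoint p l : l <= 1 -> itv_pairwise_disjoint (arc p l).
Proof.
  intros Hl. unfold arc, itv_pairwise_disjoint.
  constructor; [constructor; [|constructor] | constructor; constructor].
  intros y. unfold in_itv, Rmin; simpl. destruct Rle_dec; lra.
Qed.

Definition rot_image (s c : R) (P : itv) : list itv :=
  arc (md1 (Rmin (s * fst P) (s * snd P) + c)) (itv_len P).

Lemma affine_sweep s c p q t : s = 1 \/ s = -1 -> 0 < t < q - p ->
  exists x, p < x < q /\ s * x + c = Rmin (s * p) (s * q) + c + t.
Proof.
  intros [-> | ->] Ht.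
  - exists (p + t). rewrite Rmin_left by lra. split; lra.
  - exists (q - t). rewrite Rmin_right by lra. split; lra.
Qed.

Definition covers (T : R -> R) (D : R -> Prop) (P A : itv) : Prop :=
  forall y, in_itv A y -> exists x, in_itv P x /\ D x /\ T x = y.

Lemma rot_image_covers (T : R -> R) (D : R -> Prop) s c P :
  s = 1 \/ s = -1 -> itv_in_unit P ->
  (forall x, in_itv P x -> D x /\ T x = md1 (s * x + c)) ->
  forall A, In A (rot_image s c P) -> covers T D P A.
Proof.
  intros Hs HP HT A HA y Hy.
  set (z := Rmin (s * fst P) (s * snd P) + c).
  pose proof (md1_bounds z) as Hz.
  assert (Ht : exists t, 0 < t < itv_len P /\ (md1 z + t = y \/ md1 z + t = y + 1) /\
                        0 <= y < 1).
  { pose proof (itv_len_bounds P HP).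
    unfold rot_image, arc in HA; simpl in HA. unfold in_itv in Hy.
    destruct HA as [<- | [<- | []]]; simpl in Hy; fold z in Hy.
    - exists (y - md1 z). unfold Rmin in Hy.
      destruct Rle_dec; (split; [|split; [left|]]); lra.
    - exists (y + 1 - md1 z). split; [|split; [right|]]; lra. }
  destruct Ht as [t [Ht [Hty Hy1]]].
  destruct (itv_len_cases P) as [[_ H0] | [_ Hlen]]; [lra|].
  destruct (affine_sweep s c (fst P) (snd P) t Hs ltac:(lra)) as [x [Hx Ex]].
  exists x. destruct (HT x Hx) as [HD HTx]. split; [exact Hx|]. split; [exact HD|].
  rewrite HTx, Ex. now apply md1_shift.
Qed.

Lemma covers_disjoint (T : R -> R) (D : R -> Prop) P Q A B :
  (forall x y, D x -> D y -> T x = T y -> x = y) ->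
  covers T D P A -> covers T D Q B -> itv_disjoint P Q -> itv_disjoint A B.
Proof.
  intros Hinj HA HB HPQ y Ha Hb.
  destruct (HA y Ha) as [x [Hx [Dx <-]]]. destruct (HB _ Hb) as [x' [Hx' [Dx' E]]].
  rewrite (Hinj x' x Dx' Dx E) in Hx'. exact (HPQ x Hx Hx').
Qed.

Lemma imgIter_step T a1 a2 n A x :
  imgIter T a1 a2 n A x -> Dom a1 a2 x -> imgIter T a1 a2 (S n) A (T x).
Proof.
  intros [x0 [Hx0 [Hdom ->]]] Hx. exists x0. split; [exact Hx0|]. split; [|reflexivity].
  intros k Hk. destruct (Nat.eq_dec k n) as [-> | Hne]; [exact Hx | apply Hdom; lia].
Qed.

Lemma iter_injective T a1 a2 :
  (forall x y, Dom a1 a2 x -> Dom a1 a2 y -> T x = T y -> x = y) ->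
  forall n x y, inDomIter T a1 a2 n x -> inDomIter T a1 a2 n y ->
  Nat.iter n T x = Nat.iter n T y -> x = y.
Proof.
  intros Hinj. induction n as [|n IH]; simpl; intros x y Hx Hy E; [exact E|].
  apply IH; [intros k Hk; apply Hx; lia | intros k Hk; apply Hy; lia |].
  apply Hinj; [apply Hx; lia | apply Hy; lia | exact E].
Qed.

Lemma iterates_disjoint T a1 a2 (A : R -> Prop) m n :
  (forall x y, Dom a1 a2 x -> Dom a1 a2 y -> T x = T y -> x = y) ->
  (m < n)%nat -> disjoint (imgIter T a1 a2 (n - m) A) A ->
  disjoint (imgIter T a1 a2 m A) (imgIter T a1 a2 n A).
Proof.
  intros Hinj Hmn Hret y [x [Hx [Hdx ->]]] [z [Hz [Hdz E]]].
  replace n with (m + (n - m))%nat in Hdz, E by lia. rewrite Nat.iter_add in E.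
  assert (Hback : Nat.iter (n - m) T z = x).
  { apply (iter_injective T a1 a2 Hinj m); [| exact Hdx | exact (eq_sym E)].
    intros k Hk. rewrite <- Nat.iter_add. apply Hdz. lia. }
  apply (Hret x); [| exact Hx]. exists z. split; [exact Hz|]. split; [|now rewrite Hback].
  intros k Hk. apply Hdz. lia.
Qed.

(** * Recurrence for injective piecewise isometries *)

Section PiecewiseIsometry.

Variables (T : R -> R) (a1 a2 : R) (pieces : list (itv * (R * R))).

Hypothesis T_inj : forall x y, Dom a1 a2 x -> Dom a1 a2 y -> T x = T y -> x = y.
Hypothesis pieces_isometric : forall P s c, In (P, (s, c)) pieces ->
  (s = 1 \/ s = -1) /\ itv_in_unit P /\
  forall x, in_itv P x -> Dom a1 a2 x /\ T x = md1 (s * x + c).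
Hypothesis pieces_disjoint : ForallOrdPairs (fun p q => itv_disjoint (fst p) (fst q)) pieces.
Hypothesis pieces_tile : forall J, itv_in_unit J ->
  fold_right (fun p l => itv_len (clip J (fst p)) + l) 0 pieces = itv_len J.

(* [step J] lists open intervals filling [T(J ∩ Dom)] up to finitely many points. *)
Definition step (J : itv) : list itv :=
  flat_map (fun p => rot_image (fst (snd p)) (snd (snd p)) (clip J (fst p))) pieces.

Lemma piece_image_covers J p A : In p pieces ->
  In A (rot_image (fst (snd p)) (snd (snd p)) (clip J (fst p))) ->
  covers T (Dom a1 a2) (clip J (fst p)) A.
Proof.
  destruct p as [P [s c]]; simpl. intros Hp HA.
  destruct (pieces_isometric P s c Hp) as (Hs & HP & HT).
  apply (rot_image_covers T _ s c); [exact Hs | now apply clip_in_unit | | exact HA].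
  intros x Hx. apply HT, (in_clip J P x), Hx.
Qed.

Lemma step_covers J A : In A (step J) ->
  exists P, covers T (Dom a1 a2) P A /\ forall x, in_itv P x -> in_itv J x.
Proof.
  intros HA. apply in_flat_map in HA as [p [Hp HA]].
  exists (clip J (fst p)). split; [exact (piece_image_covers J p A Hp HA)|].
  intros x Hx. apply (in_clip J (fst p) x), Hx.
Qed.

Lemma step_disjoint J K A B : itv_disjoint J K ->
  In A (step J) -> In B (step K) -> itv_disjoint A B.
Proof.
  intros HJK HA HB.
  destruct (step_covers J A HA) as [P [HPA HPJ]], (step_covers K B HB) as [Q [HQB HQK]].
  apply (covers_disjoint T _ P Q A B T_inj HPA HQB).
  intros y HP HQ. exact (HJK y (HPJ y HP) (HQK y HQ)).
Qed.

Lemma step_in_unit J : Forall itv_in_unit (step J).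
Proof.
  apply Forall_forall. intros A HA. apply in_flat_map in HA as [[P [s c]] [Hp HA]].
  destruct (pieces_isometric P s c Hp) as (_ & HP & _).
  pose proof (itv_len_bounds _ (clip_in_unit J P HP)).
  revert A HA. apply Forall_forall, arc_in_unit; [apply md1_bounds | simpl; lra].
Qed.

Lemma step_pairwise_disjoint J : itv_pairwise_disjoint (step J).
Proof.
  apply (pairwise_disjoint_flat_map _ _ _ pieces_disjoint).
  - intros [P [s c]] Hp. apply arc_pairwise_disjoint, itv_len_bounds, clip_in_unit.
    apply (pieces_isometric P s c Hp).
  - intros p q Hp Hq Hpq A B HA HB.
    apply (covers_disjoint T _ _ _ A B T_inj (piece_image_covers J p A Hp HA)
             (piece_image_covers J q B Hq HB)).
    intros y Hy Hy'. apply (in_clip J) in Hy, Hy'. exact (Hpq y (proj2 Hy) (proj2 Hy')).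
Qed.

Lemma total_len_step J : itv_in_unit J -> total_len (step J) = itv_len J.
Proof.
  intros HJ. rewrite <- (pieces_tile J HJ). apply total_len_flat_map.
  intros [P [s c]] Hp. apply total_len_arc; [apply md1_bounds|].
  apply itv_len_bounds, clip_in_unit, (pieces_isometric P s c Hp).
Qed.

Definition orbit_itvs (J0 : itv) (n : nat) : list itv :=
  Nat.iter n (flat_map step) (J0 :: nil).

Lemma orbit_itvs_in_unit J0 n : itv_in_unit J0 -> Forall itv_in_unit (orbit_itvs J0 n).
Proof.
  intros HJ0. induction n as [|n IH]; simpl; [now constructor|].
  apply Forall_forall. intros A HA. apply in_flat_map in HA as [J [_ HA]].
  exact (proj1 (Forall_forall _ _) (step_in_unit J) A HA).
Qed.

Lemma orbit_itvs_pairwise_disjoint J0 n : itv_pairwise_disjoint (orbit_itvs J0 n).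
Proof.
  induction n as [|n IH]; simpl; [repeat constructor|].
  apply (pairwise_disjoint_flat_map _ _ _ IH).
  - intros J _. apply step_pairwise_disjoint.
  - intros J K _ _ HJK A B. exact (step_disjoint J K A B HJK).
Qed.

Lemma total_len_orbit_itvs J0 n : itv_in_unit J0 -> total_len (orbit_itvs J0 n) = itv_len J0.
Proof.
  intros HJ0. induction n as [|n IH]; simpl; [lra|].
  rewrite <- IH. apply total_len_flat_map. intros J HJ. apply total_len_step.
  exact (proj1 (Forall_forall _ _) (orbit_itvs_in_unit J0 n HJ0) J HJ).
Qed.

Lemma orbit_itvs_in_image J0 n J y : In J (orbit_itvs J0 n) -> in_itv J y ->
  imgIter T a1 a2 n (in_itv J0) y.
Proof.
  revert J y. induction n as [|n IH]; simpl; intros J y HJ Hy.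
  - destruct HJ as [<- | []]. exists y. split; [exact Hy|]. split; [intros k Hk; lia | easy].
  - apply in_flat_map in HJ as [K [HK HJ]].
    destruct (step_covers K J HJ) as [P [HPJ HPK]].
    destruct (HPJ y Hy) as [x [Hx [Hdx <-]]].
    apply imgIter_step; [exact (IH K x HK (HPK x Hx)) | exact Hdx].
Qed.

Lemma total_len_orbit_itvs_upto J0 M : itv_in_unit J0 ->
  total_len (flat_map (orbit_itvs J0) (seq 0 M)) = INR M * itv_len J0.
Proof.
  intros HJ0. rewrite (total_len_flat_map _ (fun _ => itv_len J0)).
  - now rewrite fold_right_add_const, length_seq.
  - intros n _. now apply total_len_orbit_itvs.
Qed.

Lemma orbit_itvs_upto_pairwise_disjoint J0 M :
  (forall m n, (m < n)%nat ->
     disjoint (imgIter T a1 a2 m (in_itv J0)) (imgIter T a1 a2 n (in_itv J0))) ->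
  itv_pairwise_disjoint (flat_map (orbit_itvs J0) (seq 0 M)).
Proof.
  intros Hdisj. apply (pairwise_disjoint_flat_map (fun m n => m <> n)).
  - apply NoDup_iff_ForallOrdPairs, seq_NoDup.
  - intros n _. apply orbit_itvs_pairwise_disjoint.
  - intros m n _ _ Hmn A B HA HB y HyA HyB.
    pose proof (orbit_itvs_in_image J0 m A y HA HyA) as Hm.
    pose proof (orbit_itvs_in_image J0 n B y HB HyB) as Hn.
    destruct (Nat.lt_gt_cases m n) as [[Hlt | Hgt] _]; [exact Hmn | |].
    + exact (Hdisj m n Hlt y Hm Hn).
    + exact (Hdisj n m Hgt y Hn Hm).
Qed.

(* Poincare recurrence: the [T^n(J0)] all carry total length [|J0|] inside the circle. *)
Theorem piecewise_isometry_recurrence J0 : itv_in_unit J0 -> fst J0 < snd J0 ->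
  exists n, (1 <= n)%nat /\ ~ disjoint (imgIter T a1 a2 n (in_itv J0)) (in_itv J0).
Proof.
  intros HJ0 HJ0pos. apply NNPP. intros Hnever.
  assert (Hdisj : forall m n, (m < n)%nat ->
    disjoint (imgIter T a1 a2 m (in_itv J0)) (imgIter T a1 a2 n (in_itv J0))).
  { intros m n Hmn. apply (iterates_disjoint T a1 a2 _ m n T_inj Hmn).
    intros y Hn Hy. apply Hnever. exists (n - m)%nat. split; [lia|].
    intros Hd. exact (Hd y Hn Hy). }
  destruct (itv_len_cases J0) as [[? _] | [_ Hlen]]; [lra|].
  destruct (archimed_cor1 (itv_len J0) ltac:(lra)) as [M [HM HM0]].
  assert (Hpack : total_len (flat_map (orbit_itvs J0) (seq 0 M)) <= 1).
  { apply total_len_le_1; [| exact (orbit_itvs_upto_pairwise_disjoint J0 M Hdisj)].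
    apply Forall_forall. intros A HA. apply in_flat_map in HA as [n [_ HA]].
    exact (proj1 (Forall_forall _ _) (orbit_itvs_in_unit J0 n HJ0) A HA). }
  rewrite total_len_orbit_itvs_upto in Hpack by exact HJ0.
  apply (Rmult_lt_compat_l (INR M)) in HM; [| apply lt_0_INR; lia].
  rewrite Rinv_r in HM; [lra | apply not_0_INR; lia].
Qed.

End PiecewiseIsometry.

(** * Three-interval exchanges *)

Definition cet_pieces (a1 a2 s1 c1 s2 c2 s3 c3 : R) : list (itv * (R * R)) :=
  ((0, a1), (s1, c1)) :: ((a1, a2), (s2, c2)) :: ((a2, 1), (s3, c3)) :: nil.

Lemma isometry_on_cases T J : isometry_on T J ->
  exists s c, (s = 1 \/ s = -1) /\ forall x, J x -> T x = md1 (s * x + c).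
Proof. intros [[c H] | [c H]]; eauto. Qed.

Lemma cet3_recurrence T a1 a2 : CET3 T a1 a2 ->
  exists n, (1 <= n)%nat /\ ~ disjoint (imgIter T a1 a2 n (I1 a1 a2)) (I1 a1 a2).
Proof.
  intros (Ha1 & Ha2 & Hinj & Hiso1 & Hiso2 & Hiso3 & _).
  destruct (isometry_on_cases T _ Hiso1) as (s1 & c1 & Hs1 & HT1).
  destruct (isometry_on_cases T _ Hiso2) as (s2 & c2 & Hs2 & HT2).
  destruct (isometry_on_cases T _ Hiso3) as (s3 & c3 & Hs3 & HT3).
  apply (piecewise_isometry_recurrence T a1 a2 (cet_pieces a1 a2 s1 c1 s2 c2 s3 c3) Hinj)
    with (J0 := (0, a1)); unfold itv_in_unit; simpl; try lra.
  - intros P s c Hp. unfold itv_in_unit, in_itv, Dom.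
    destruct Hp as [Hp | [Hp | [Hp | []]]]; injection Hp as <- <- <-; simpl;
      (split; [assumption | split; [lra |]]); intros x Hx;
      (split; [| auto]); unfold I1, I2, I3; lra.
  - unfold itv_disjoint, in_itv.
    repeat apply FOP_cons; repeat apply Forall_cons; try apply Forall_nil;
      try apply FOP_nil; simpl; intros y; lra.
  - intros J HJ. unfold itv_in_unit, itv_len, clip in *; simpl.
    unfold Rmax, Rmin; repeat destruct Rle_dec; lra.
Qed.

(* [T x = c - x - k] with [k] an integer, so [c - z = z + k] at the midpoint [z]. *)
Lemma reflection_midpoint_fixed (T : R -> R) K c x : itv_in_unit K ->
  (forall x, in_itv K x -> T x = md1 (-1 * x + c)) -> in_itv K x -> in_itv K (T x) ->
  in_itv K ((x + T x) / 2) /\ T ((x + T x) / 2) = (x + T x) / 2.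
Proof.
  unfold itv_in_unit, in_itv. intros HK HT Hx HTx.
  assert (Hmid : fst K < (x + T x) / 2 < snd K) by lra.
  split; [exact Hmid|].
  assert (E : T x = -1 * x + c - IZR (Int_part (-1 * x + c))) by (rewrite HT; easy).
  rewrite HT by exact Hmid.
  replace (-1 * ((x + T x) / 2) + c) with (IZR (Int_part (-1 * x + c)) + (x + T x) / 2) by lra.
  apply md1_IZR_add. lra.
Qed.

Lemma reflection_no_return T a1 a2 K c : itv_in_unit K ->
  (forall x, in_itv K x -> Dom a1 a2 x) ->
  (forall x, in_itv K x -> T x = md1 (-1 * x + c)) ->
  (forall p, ~ periodic_point T a1 a2 p) ->
  disjoint (imgIter T a1 a2 1 (in_itv K)) (in_itv K).
Proof.
  intros HK HD HT Hnp y [x [Hx [_ ->]]] HTx.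
  destruct (reflection_midpoint_fixed T K c x HK HT Hx HTx) as [Hmid Hfix].
  apply (Hnp ((x + T x) / 2)). exists 1%nat. split; [lia|]. split; [|exact Hfix].
  intros k Hk. replace k with 0%nat by lia. exact (HD _ Hmid).
Qed.

Theorem lemma3p3 (T : R -> R) (a1 a2 : R) :
  CET3 T a1 a2 ->
  is_flip T (I1 a1 a2) -> ~ is_flip T (I2 a1 a2) -> ~ is_flip T (I3 a1 a2) ->
  cyc_sets (imgIter T a1 a2 1 (I1 a1 a2)) (imgIter T a1 a2 1 (I3 a1 a2))
           (imgIter T a1 a2 1 (I2 a1 a2)) ->
  (forall p, ~ periodic_point T a1 a2 p) ->
  exists N : nat, (2 <= N)%nat /\
    (forall n, (1 <= n <= N - 1)%nat ->
       disjoint (imgIter T a1 a2 n (I1 a1 a2)) (I1 a1 a2)) /\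
    ~ disjoint (imgIter T a1 a2 N (I1 a1 a2)) (I1 a1 a2) /\
    (forall m n, (m < n)%nat -> (n <= N - 1)%nat ->
       disjoint (imgIter T a1 a2 m (I1 a1 a2)) (imgIter T a1 a2 n (I1 a1 a2))).
Proof.
  intros HC [c Hflip] _ _ _ Hnp.
  pose proof HC as (Ha1 & Ha2 & Hinj & _).
  set (returns := fun n =>
    (1 <= n)%nat /\ ~ disjoint (imgIter T a1 a2 n (I1 a1 a2)) (I1 a1 a2)).
  assert (Hno1 : ~ returns 1%nat).
  { intros [_ H1]. apply H1.
    apply (reflection_no_return T a1 a2 (0, a1) c); unfold itv_in_unit, in_itv, Dom; simpl;
      [lra | intros x Hx; now left | exact Hflip | exact Hnp]. }
  destruct (Wf_nat.dec_inh_nat_subset_has_unique_least_element returns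
              (fun n => classic (returns n)) (cet3_recurrence T a1 a2 HC))
    as [N [[[HN1 HN] Hmin] _]].
  assert (Hfirst : forall n, (1 <= n < N)%nat ->
    disjoint (imgIter T a1 a2 n (I1 a1 a2)) (I1 a1 a2)).
  { intros n Hn. apply NNPP. intros Hret. specialize (Hmin n (conj (proj1 Hn) Hret)). lia. }
  assert (N <> 1%nat) by (intros ->; exact (Hno1 (conj HN1 HN))).
  exists N. split; [lia|]. split; [intros n Hn; apply Hfirst; lia|]. split; [exact HN|].
  intros m n Hmn HnN. apply (iterates_disjoint T a1 a2 _ m n Hinj Hmn), Hfirst. lia.
Qed.
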